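(* Consider the single-hop VAoI system described in the context, operated under the threshold policy with threshold $\Delta_T\in\{0,1,2,\dots\}$. Then the average VAoI is \[ \bar\Delta_{(\Delta_T)}=\frac12\,\frac{(\Delta_T-1)\Delta_T\,p_s}{(\Delta_T-1)p_s+\beta}+\frac{p_g}{p_s}, \] where $\beta=1-(1-p_s)(1-p_g)$.
   Context: Time is slotted, $t\in\{0,1,2,\dots\}$. An information source generates a new version in each slot independently with probability $p_g$; let $G_t\in\{0,1\}$ indicate whether a new version is generated in slot $t$. A transmitter holding the current source version may, in each slot $t$, attempt to send it to a receiver over an erasure channel; $a(t)\in\{0,1\}$ indicates an attempt, and each attempt succeeds independently with probability $p_s$. The Version Age of Information (VAoI) $\Delta(t)$ evolves as $\Delta(t+1)=G_t$ if $a(t)=1$ and the attempt succeeds, and $\Delta(t+1)=\Delta(t)+G_t$ otherwise. All version-generation and channel events are mutually independent. Assume $0<p_s<1$, $0<p_g<1$. The threshold policy with threshold $\Delta_T$ sets $a(t)=1$ iff $\Delta(t)\ge\Delta_T$. The average VAoI is $\bar\Delta_{(\Delta_T)}=\lim_{t\to\infty}\mathbb{E}[\Delta(t)]=\sum_{n\ge0}n\mu_n$, where $(\mu_n)$ is the stationary distribution of the (ergodic) Markov chain $\Delta(t)$. *)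

From Stdlib Require Import Reals.
From Coquelicot Require Import Coquelicot.
Open Scope R_scope.

(* One-slot dynamics of the VAoI under the threshold policy with threshold DT.
   [a]  : attempt indicator a(t) = (DT <= Delta(t)),
   [s]  : whether the channel attempt would succeed (prob. ps),
   [g]  : G_t in {0,1} (new version generated, prob. pg). *)
Definition attempt (DT n : nat) : bool := Nat.leb DT n.

Definition vaoi_next (DT n : nat) (s : bool) (g : nat) : nat :=
  if andb (attempt DT n) s then g else (n + g)%nat.

Definition ind (b : bool) : R := if b then 1 else 0.

Definition w_s (ps : R) (s : bool) : R := if s then ps else 1 - ps.
Definition w_g (pg : R) (g : nat) : R := if Nat.eqb g 1 then pg else 1 - pg.

(* Transition probability P(Delta(t+1) = m | Delta(t) = n) of the Markov chain
   Delta(t) under the threshold policy: sum over the independent events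
   (channel outcome s, generation G_t = g). When no attempt is made the
   channel outcome is irrelevant (vaoi_next ignores s). *)
Definition vaoi_trans (ps pg : R) (DT n m : nat) : R :=
  w_s ps true  * w_g pg 0 * ind (Nat.eqb (vaoi_next DT n true 0) m)
+ w_s ps true  * w_g pg 1 * ind (Nat.eqb (vaoi_next DT n true 1) m)
+ w_s ps false * w_g pg 0 * ind (Nat.eqb (vaoi_next DT n false 0) m)
+ w_s ps false * w_g pg 1 * ind (Nat.eqb (vaoi_next DT n false 1) m).

Definition stationary (ps pg : R) (DT : nat) (mu : nat -> R) : Prop :=
  (forall n, 0 <= mu n) /\
  is_series mu 1 /\
  (forall m, is_series (fun n => mu n * vaoi_trans ps pg DT n m) (mu m)).

From Pilot Require Import Defs.
From Stdlib Require Import Reals Lra Lia.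
From Coquelicot Require Import Coquelicot.
Open Scope R_scope.

(* Below the threshold no attempt is made, so the balance equations force the
   stationary law to be flat, mu_n = y for 0 < n < DT with mu_0 = (1 - pg) y;
   at and above the threshold they force geometric decay
   mu_(DT+k) = r^k mu_DT with r = (1 - ps) pg / beta and beta mu_DT = pg y.
   Normalization gives y = ps / ((DT - 1) ps + beta), and the mean is an
   arithmetic sum plus a geometric and a differentiated geometric series. *)

Lemma is_series_finite_support (a : nat -> R) (N : nat) :
  (forall n, (N < n)%nat -> a n = 0) -> is_series a (sum_f_R0 a N).
Proof.
  intros Ha.
  apply (filterlim_ext_loc (fun _ => sum_f_R0 a N)); [|apply filterlim_const].
  exists N; intros M HM; rewrite sum_n_Reals.
  induction HM as [|M HM IH]; [reflexivity|].
  rewrite tech5, <- IH, (Ha (S M)) by lia; ring.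
Qed.

Lemma is_series_tail (a : nat -> R) (n : nat) (l : R) :
  is_series (fun k => a (S n + k)%nat) l -> is_series a (sum_f_R0 a n + l).
Proof.
  intros Hl; apply (is_series_decr_n a (S n)); [lia|].
  rewrite sum_n_Reals; simpl pred.
  match goal with |- is_series _ ?x => replace x with l; [exact Hl|] end.
  change (l = sum_f_R0 a n + l + - sum_f_R0 a n); ring.
Qed.

Lemma is_series_geom_deriv (r : R) : 0 <= r < 1 ->
  is_series (fun n => INR (S n) * r ^ n) (/ (1 - r) ^ 2).
Proof.
  intros Hr.
  assert (Hgeom : is_series (fun n => r ^ n) (/ (1 - r)))
    by (apply is_series_geom; rewrite Rabs_pos_eq; lra).
  assert (Hpos : forall n, 0 <= r ^ n) by (intros; apply pow_le; lra).
  replace (/ (1 - r) ^ 2) with (/ (1 - r) * / (1 - r)) by (field; lra).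
  eapply is_series_ext; [|exact (is_series_mult_pos _ _ _ _ Hgeom Hgeom Hpos Hpos)].
  intros n; cbv beta; rewrite (sum_eq _ (fun _ => r ^ n)), sum_cte.
  - apply Rmult_comm.
  - intros i Hi; rewrite <- pow_add; f_equal; lia.
Qed.

Lemma is_series_point (a : nat -> R) (m : nat) :
  is_series (fun n => a n * Defs.ind (Nat.eqb n m)) (a m).
Proof.
  replace (a m) with (sum_f_R0 (fun n => a n * Defs.ind (Nat.eqb n m)) m).
  - apply is_series_finite_support; intros n Hn.
    unfold Defs.ind; rewrite (proj2 (Nat.eqb_neq n m)) by lia; ring.
  - destruct m as [|m]; [simpl; unfold Defs.ind; ring|].
    rewrite tech5, sum_eq_R0, Nat.eqb_refl; [unfold Defs.ind; ring|].
    intros n Hn; unfold Defs.ind; rewrite (proj2 (Nat.eqb_neq n (S m))) by lia; ring.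
Qed.

Lemma is_series_pred_point (a : nat -> R) (m : nat) :
  is_series (fun n => a n * Defs.ind (Nat.eqb (S n) m))
    (match m with 0 => 0 | S k => a k end).
Proof.
  destruct m as [|m]; [|exact (is_series_point a m)].
  replace 0 with (sum_f_R0 (fun n => a n * Defs.ind (Nat.eqb (S n) 0)) 0)
    by (simpl; unfold Defs.ind; ring).
  apply is_series_finite_support; intros n _; unfold Defs.ind; simpl; ring.
Qed.

Definition reset_rate (ps : R) (DT n : nat) : R := if attempt DT n then ps else 0.
Definition hold_rate (ps pg : R) (DT n : nat) : R :=
  if attempt DT n then (1 - ps) * (1 - pg) else 1 - pg.
Definition grow_rate (ps pg : R) (DT n : nat) : R :=
  if attempt DT n then (1 - ps) * pg else pg.
Definition fresh_dist (pg : R) (m : nat) : R :=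
  match m with 0 => 1 - pg | 1 => pg | _ => 0 end.

Lemma attempt_below (DT n : nat) : (n < DT)%nat -> attempt DT n = false.
Proof. intros H; apply Nat.leb_gt, H. Qed.

Lemma attempt_above (DT n : nat) : (DT <= n)%nat -> attempt DT n = true.
Proof. intros H; apply Nat.leb_le, H. Qed.

Lemma vaoi_trans_decomp (ps pg : R) (DT n m : nat) :
  vaoi_trans ps pg DT n m =
  reset_rate ps DT n * fresh_dist pg m
  + hold_rate ps pg DT n * Defs.ind (Nat.eqb n m)
  + grow_rate ps pg DT n * Defs.ind (Nat.eqb (S n) m).
Proof.
  unfold vaoi_trans, vaoi_next, reset_rate, hold_rate, grow_rate, w_s, w_g.
  rewrite Nat.add_0_r, Nat.add_1_r.
  destruct (attempt DT n), m as [|[|m]]; simpl; unfold Defs.ind; ring.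
Qed.

(* From age 0, a delivered update and an idle slot lead to the same age G_t. *)
Lemma vaoi_trans_threshold_0 (ps pg : R) (n m : nat) :
  vaoi_trans ps pg 0 n m = vaoi_trans ps pg 1 n m.
Proof. destruct n; reflexivity. Qed.

Lemma stationary_threshold_0 (ps pg : R) (mu : nat -> R) :
  stationary ps pg 0 mu -> stationary ps pg 1 mu.
Proof.
  intros [Hpos [Hmass Hinv]]; split; [exact Hpos|]; split; [exact Hmass|].
  intros m; eapply is_series_ext; [|exact (Hinv m)].
  intros n; cbv beta; rewrite vaoi_trans_threshold_0; reflexivity.
Qed.

Lemma ex_series_reset_flow (ps pg : R) (DT : nat) (mu : nat -> R) :
  0 <= ps <= 1 -> stationary ps pg DT mu ->
  ex_series (fun n => mu n * reset_rate ps DT n).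
Proof.
  intros Hps [Hpos [Hmass _]].
  apply (@ex_series_le R_AbsRing R_CompleteNormedModule _ mu); [|exists 1; exact Hmass].
  intros n; change (Rabs (mu n * reset_rate ps DT n) <= mu n).
  specialize (Hpos n); unfold reset_rate; destruct (attempt DT n).
  - rewrite Rabs_pos_eq; nra.
  - rewrite Rmult_0_r, Rabs_R0; lra.
Qed.

Lemma stationary_balance (ps pg : R) (DT : nat) (mu : nat -> R) (rate : R) (m : nat) :
  stationary ps pg DT mu ->
  is_series (fun n => mu n * reset_rate ps DT n) rate ->
  mu m = rate * fresh_dist pg m + mu m * hold_rate ps pg DT m
         + match m with 0 => 0 | S k => mu k * grow_rate ps pg DT k end.
Proof.
  intros [_ [_ Hinv]] Hrate.
  rewrite <- (is_series_unique _ _ (Hinv m)) at 1; apply is_series_unique.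
  assert (Hsum := is_series_plus _ _ _ _
    (is_series_plus _ _ _ _ (is_series_scal_r (fresh_dist pg m) _ _ Hrate)
       (is_series_point (fun n => mu n * hold_rate ps pg DT n) m))
    (is_series_pred_point (fun n => mu n * grow_rate ps pg DT n) m)).
  eapply is_series_ext; [|exact Hsum].
  intros n; cbv beta; rewrite vaoi_trans_decomp; unfold plus; simpl; ring.
Qed.

Section ThresholdChain.

Variables (ps pg : R) (D : nat) (mu : nat -> R).
Hypotheses (Hps : 0 < ps < 1) (Hpg : 0 < pg < 1).
Hypothesis Hmu : stationary ps pg (S D) mu.

Let beta := 1 - (1 - ps) * (1 - pg).
Let r := (1 - ps) * pg / beta.
Let update_rate := Series (fun n => mu n * reset_rate ps (S D) n).
Let y := mu 0 / (1 - pg).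

Lemma beta_gt_0 : 0 < beta.
Proof. unfold beta; nra. Qed.

Lemma one_minus_r : 1 - r = ps / beta.
Proof.
  pose proof beta_gt_0; unfold r.
  replace (ps / beta) with ((beta - (1 - ps) * pg) / beta) by (f_equal; unfold beta; ring).
  field; lra.
Qed.

Lemma r_bounds : 0 <= r < 1.
Proof.
  pose proof beta_gt_0; pose proof one_minus_r.
  split; [|assert (0 < ps / beta) by (apply Rdiv_lt_0_compat; lra); lra].
  unfold r; apply Rmult_le_pos; [nra|left; apply Rinv_0_lt_compat; lra].
Qed.

Lemma balance (m : nat) :
  mu m = update_rate * fresh_dist pg m + mu m * hold_rate ps pg (S D) m
         + match m with 0 => 0 | S k => mu k * grow_rate ps pg (S D) k end.
Proof.
  apply (stationary_balance ps pg (S D) mu update_rate m Hmu), Series_correct.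
  apply (ex_series_reset_flow ps pg); [lra|exact Hmu].
Qed.

Lemma mu_0 : mu 0 = (1 - pg) * y.
Proof. unfold y; field; lra. Qed.

Lemma update_rate_eq : update_rate = pg * y.
Proof.
  pose proof (balance 0) as B; pose proof mu_0.
  unfold hold_rate in B; rewrite attempt_below in B by lia; simpl in B.
  apply (Rmult_eq_reg_r (1 - pg)); [nra|lra].
Qed.

Lemma mu_below_threshold (n : nat) : (1 <= n <= D)%nat -> mu n = y.
Proof.
  pose proof update_rate_eq; pose proof mu_0.
  induction n as [|n IH]; intros Hn; [lia|].
  pose proof (balance (S n)) as B.
  unfold hold_rate, grow_rate in B; rewrite !attempt_below in B by lia.
  apply (Rmult_eq_reg_l pg); [|lra].
  destruct n as [|n]; simpl in B; [nra|].
  rewrite IH in B by lia; lra.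
Qed.

Lemma mu_at_threshold : beta * mu (S D) = pg * y.
Proof.
  pose proof update_rate_eq; pose proof mu_0.
  pose proof (balance (S D)) as B.
  unfold hold_rate, grow_rate in B.
  rewrite attempt_above, attempt_below in B by lia.
  unfold beta; destruct (Nat.eq_0_gt_0_cases D) as [HD|HD].
  - rewrite HD in B |- *; simpl in B; nra.
  - replace (fresh_dist pg (S D)) with 0 in B by (destruct D; [lia|reflexivity]).
    rewrite (mu_below_threshold D) in B by lia; nra.
Qed.

Lemma mu_above_threshold (k : nat) : mu (S D + k) = r ^ k * mu (S D).
Proof.
  pose proof beta_gt_0.
  induction k as [|k IH]; [rewrite Nat.add_0_r; simpl; ring|].
  pose proof (balance (S D + S k)) as B.
  rewrite Nat.add_succ_r in B |- *; simpl fresh_dist in B.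
  unfold hold_rate, grow_rate in B; rewrite !attempt_above in B by lia.
  transitivity (r * mu (S D + k)); [|rewrite IH; simpl; ring].
  apply (Rmult_eq_reg_l beta); [|lra].
  unfold r; field_simplify; [unfold beta; lra|lra].
Qed.

Lemma partial_mass (j : nat) : (j <= D)%nat -> sum_f_R0 mu j = (1 - pg) * y + INR j * y.
Proof.
  induction j as [|j IH]; intros Hj; [simpl; rewrite mu_0; ring|].
  rewrite tech5, IH, (mu_below_threshold (S j)), S_INR by lia; ring.
Qed.

Lemma partial_mean (j : nat) : (j <= D)%nat ->
  sum_f_R0 (fun n => INR n * mu n) j = y * INR j * (INR j + 1) / 2.
Proof.
  induction j as [|j IH]; intros Hj; [simpl; field|].
  rewrite tech5, IH, (mu_below_threshold (S j)), S_INR by lia; field.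
Qed.

Lemma is_series_geom_r : is_series (fun k => r ^ k) (beta / ps).
Proof.
  pose proof r_bounds; pose proof beta_gt_0.
  replace (beta / ps) with (/ (1 - r)) by (rewrite one_minus_r; field; lra).
  apply is_series_geom; rewrite Rabs_pos_eq; lra.
Qed.

Lemma stationary_level : y = ps / (INR D * ps + beta).
Proof.
  pose proof beta_gt_0; pose proof mu_at_threshold; pose proof (pos_INR D).
  assert (Htail : is_series (fun k => mu (S D + k)) (beta / ps * mu (S D))).
  { eapply is_series_ext; [|exact (is_series_scal_r _ _ _ is_series_geom_r)].
    intros k; cbv beta; rewrite mu_above_threshold; reflexivity. }
  destruct Hmu as [_ [Hmass _]].
  apply is_series_tail in Htail; rewrite partial_mass in Htail by lia.
  apply is_series_unique in Htail; apply is_series_unique in Hmass.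
  replace (mu (S D)) with (pg * y / beta) in Htail by (rewrite <- mu_at_threshold; field; lra).
  assert (Hnorm : y * (INR D * ps + beta) = ps * Series mu).
  { rewrite Htail; unfold beta in *; field; lra. }
  rewrite Hmass, Rmult_1_r in Hnorm.
  apply (Rmult_eq_reg_r (INR D * ps + beta)); [|nra].
  rewrite Hnorm; field; nra.
Qed.

Lemma stationary_mean :
  is_series (fun n => INR n * mu n)
    (1 / 2 * (INR D * INR (S D) * ps / (INR D * ps + beta)) + pg / ps).
Proof.
  pose proof beta_gt_0; pose proof (pos_INR D).
  assert (Hderiv := is_series_geom_deriv r r_bounds).
  rewrite one_minus_r in Hderiv.
  assert (Htail := is_series_plus _ _ _ _
    (is_series_scal_r (INR D * mu (S D)) _ _ is_series_geom_r)
    (is_series_scal_r (mu (S D)) _ _ Hderiv)).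
  apply (is_series_ext _ (fun k => INR (S D + k) * mu (S D + k))) in Htail.
  2:{ intros k; rewrite mu_above_threshold, plus_INR, !S_INR; unfold plus; simpl; ring. }
  apply (is_series_tail (fun n => INR n * mu n)) in Htail.
  rewrite partial_mean in Htail by lia.
  refine (eq_ind _ (is_series (fun n => INR n * mu n)) Htail _ _).
  replace (mu (S D)) with (pg * y / beta) by (rewrite <- mu_at_threshold; field; lra).
  rewrite stationary_level, S_INR; unfold plus; simpl.
  field; repeat split; nra.
Qed.

End ThresholdChain.

Theorem lemma2 (ps pg : R) (DT : nat) (mu : nat -> R) :
  0 < ps < 1 -> 0 < pg < 1 ->
  stationary ps pg DT mu ->
  let beta := 1 - (1 - ps) * (1 - pg) in
  is_series (fun n => INR n * mu n)
    (1 / 2 * (((INR DT - 1) * INR DT * ps) / ((INR DT - 1) * ps + beta))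
     + pg / ps).
Proof.
  intros Hps Hpg Hmu beta.
  destruct DT as [|D].
  - refine (eq_ind _ _ (stationary_mean ps pg 0 mu Hps Hpg (stationary_threshold_0 _ _ _ Hmu)) _ _).
    simpl; unfold Rdiv; ring.
  - replace (INR (S D) - 1) with (INR D) by (rewrite S_INR; ring).
    exact (stationary_mean ps pg D mu Hps Hpg Hmu).
Qed.
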